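(* Consider the coupled opinion–network system described in the context with memory weight dynamics, and assume there is a constant $c_\phi>0$ with $\phi(r)>c_\phi$ for all $r\in[-2,2]$. Then the population reaches consensus (there exists $x^*$ with $x_i(t)\to x^*$ for all $i$), and for all $i\neq j$, $w_{ij}(t)\to\phi(0)>0$ as $t\to\infty$, i.e. the network becomes fully connected with edge weight $\phi(0)$.
   Context: There are $N$ individuals with opinions $x_i(t)\in[-1,1]$ and edge weights $w_{ij}(t)\in[0,1]$. The degree is $k_i=\sum_{j=1}^N w_{ij}$. With interaction function $\phi:[-2,2]\to[0,1]$, the system with memory weight dynamics is $\frac{dx_i}{dt}=\frac{1}{k_i}\sum_{j\neq i} w_{ij}\,\phi(x_j-x_i)(x_j-x_i)$, $\frac{dw_{ij}}{dt}=\phi(x_j-x_i)-w_{ij}$ for $i\neq j$, and $w_{ii}\equiv 1$. Standing assumptions: $\phi$ is Lipschitz continuous, even, and $\phi(0)>0$; $x_1(0)\le\dots\le x_N(0)$; $w_{ii}=1$; the initial network $w(0)$ is strongly connected (for all $i,j$ there is a sequence $i=i_0,\dots,i_m=j$ with $w_{i_n i_{n+1}}(0)>0$). *)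

From HB Require Import structures.
From mathcomp Require Import all_boot all_order all_algebra.
From mathcomp Require Import all_classical all_reals all_analysis.
Set Implicit Arguments. Unset Strict Implicit. Unset Printing Implicit Defensive.
Import Order.TTheory GRing.Theory Num.Theory.
Import numFieldNormedType.Exports.
Local Open Scope ring_scope.

Definition degree (R : realType) (N : nat) (W : 'I_N -> 'I_N -> R) (i : 'I_N) : R :=
  \sum_(j < N) W i j.

Definition opinion_rhs (R : realType) (N : nat) (phi : R -> R)
    (X : 'I_N -> R) (W : 'I_N -> 'I_N -> R) (i : 'I_N) : R :=
  (degree W i)^-1 *
    \sum_(j < N | j != i) W i j * phi (X j - X i) * (X j - X i).

Definition strongly_connected (R : realType) (N : nat) (W : 'I_N -> 'I_N -> R) : Prop :=
  forall i j : 'I_N, exists s : seq 'I_N,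
    path (fun a b => 0 < W a b) i s /\ last i s = j.

Definition lipschitz_on_m22 (R : realType) (phi : R -> R) : Prop :=
  exists L : R, forall r s : R, -2 <= r <= 2 -> -2 <= s <= 2 ->
    `|phi r - phi s| <= L * `|r - s|.

From HB Require Import structures.
From mathcomp Require Import all_boot all_order all_algebra.
From mathcomp Require Import all_classical all_reals all_analysis.
From mathcomp Require Import ring lra.
Import Order.TTheory GRing.Theory Num.Theory.
Import numFieldNormedType.Exports.
Local Open Scope classical_set_scope.
Local Open Scope ring_scope.

(** Since phi > c_phi on [-2, 2], every weight obeys w' = phi - w > c_phi - w
    and is eventually at least c_phi / 2.  From then on an agent holding an
    extreme opinion is pulled towards every other agent at rate at least
    alpha = c_phi^2 / (2 N).  A maximum principle for the family of opinions,
    proved by a supremum argument, shows that upper bounds of all opinions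
    persist and lower bounds too; if the best eventual upper bound exceeded the
    best eventual lower bound by d > 0, the maximal opinion would decrease at
    rate alpha d forever, which is absurd.  Finally w_ij solves the linear relaxation equation
    w' = g - w whose forcing g = phi (x_j - x_i) tends to phi 0, so
    w_ij tends to phi 0. *)

Section MaxPrinciple.
Context {R : realType}.

Lemma is_derive_continuous [f : R -> R] [t d : R] :
  is_derive t 1 f d -> {for t, continuous f}.
Proof. by move=> fd; apply/differentiable_continuous/derivable1_diffP/ex_derive. Qed.

Lemma is_derive_lt0_near_right [f : R -> R] [s d : R] :
  is_derive s 1 f d -> d < 0 -> \forall t \near s^'+, f t < f s.
Proof.
move=> [fd fdE] d_lt0.
have := cvgr_lt _ fd 0; rewrite -/('D_1 f s) fdE => /(_ _ d_lt0).
rewrite near_withinE => /nbhs_ballP[e e_gt0 fe].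
apply/nbhs_ballP; exists e => // t st_e st.
have := fe (t - s); rewrite /ball /= sub0r normrN distrC /shift /=.
rewrite -[(t - s)%:A]/((t - s) * 1) mulr1 subrK -[_ *: _]/(_ * _).
rewrite pmulr_rlt0 ?invr_gt0 ?subr_gt0 // subr_lt0; apply=> //.
by rewrite subr_eq0 gt_eqF.
Qed.

Lemma max_principle_strict [n] [f df : 'I_n -> R -> R] [t1 t2 L : R] :
  t1 <= t2 ->
  (forall t, t1 <= t <= t2 -> forall i, is_derive t 1 (f i) (df i t)) ->
  (forall t, t1 <= t <= t2 -> forall i,
     (forall j, f j t <= f i t) -> df i t < 0) ->
  (forall j, f j t1 <= L) -> forall j, f j t2 <= L.
Proof.
move=> t12 f_deriv df_lt0 f_t1.
pose S := [set t | t1 <= t <= t2 /\ forall j, f j t <= L].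
have S_t1 : S t1 by split; first by rewrite lexx.
have S_ub : ubound S t2 by move=> t [/andP[]].
have S_sup : has_sup S by split; [exists t1 | exists t2].
(* [s] lies in [S] by continuity; if [s < t2], the derivative sign at the
   indices where [L] is attained keeps all [f j] below [L] just after [s]. *)
set s := sup S.
have t1s : t1 <= s := ub_le_sup S_sup.2 S_t1.
have st2 : s <= t2 by apply: ge_sup => //; exists t1.
have s_itv : t1 <= s <= t2 by rewrite t1s st2.
have f_cont j : {for s, continuous (f j)}.
  exact: is_derive_continuous (f_deriv _ s_itv j).
have f_s j : f j s <= L.
  rewrite leNgt; apply/negP => Lfs.
  have /(_ _)/nbhs_ballP[e e_gt0 fe] := cvgr_gt _ (f_cont j) _ Lfs.
  have [u Su] := sup_adherent e_gt0 S_sup; rewrite -/s => seu.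
  have us : u <= s := ub_le_sup S_sup.2 Su.
  case: Su => _ fuL.
  have : L < f j u by apply: fe; rewrite /ball /= ger0_norm ?subr_ge0 //; lra.
  by rewrite ltNge fuL.
suff <- : s = t2 by [].
apply/eqP; rewrite eq_le st2 /= leNgt; apply/negP => st2'.
have near_L j : \forall t \near s^'+, f j t <= L.
  have [fsL | Lfs] := ltP (f j s) L.
    have /(_ _) := cvgr_lt _ (f_cont j) _ fsL.
    by rewrite near_withinE; apply: filterS => t /ltW.
  have max_j i : f i s <= f j s by apply: le_trans (f_s i) Lfs.
  have := is_derive_lt0_near_right (f_deriv s s_itv j) (df_lt0 s s_itv j max_j).
  by apply: filterS => t /ltW /le_trans; apply; apply: f_s.
near (s^'+) => u.
have su : s < u by near: u; exact: nbhs_right_gt.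
have Su : S u.
  split; last by near: u; exact: filter_forall near_L.
  have ut2 : u < t2 by near: u; exact: nbhs_right_lt st2'.
  by rewrite (le_trans t1s (ltW su)) ltW.
by have := ub_le_sup S_sup.2 Su; rewrite leNgt su.
Unshelve. all: by end_near. Qed.

Lemma max_descent [n] (f df : 'I_n -> R -> R) (k : R) [t1 t2 L : R] :
  t1 <= t2 ->
  (forall t, t1 <= t <= t2 -> forall i, is_derive t 1 (f i) (df i t)) ->
  (forall t, t1 <= t <= t2 -> forall i,
     (forall j, f j t <= f i t) -> df i t <= - k) ->
  (forall j, f j t1 <= L) -> forall j, f j t2 <= L - k * (t2 - t1).
Proof.
move=> t12 f_deriv df_le f_t1 j; apply/ler_addgt0Pr => e e_gt0.
set eps := e / (t2 - t1 + 1).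
have eps_gt0 : 0 < eps by rewrite divr_gt0 //; lra.
have eps_le : eps * (t2 - t1) <= e.
  by rewrite /eps mulrAC ler_pdivrMr; [nra | lra].
(* Tilting by [(k - eps) t] makes the derivative at a maximal index negative. *)
pose g i t := f i t + (k - eps) * t.
have g_deriv t : t1 <= t <= t2 ->
    forall i, is_derive t 1 (g i) (df i t + (k - eps)).
  move=> t_itv i; apply: is_derive_eq.
    exact: is_deriveD (f_deriv t t_itv i) (is_deriveZ _ (is_derive_id t 1)).
  by rewrite /GRing.scale /= mulr1.
have g_max_lt0 t : t1 <= t <= t2 -> forall i, (forall j, g j t <= g i t) ->
    df i t + (k - eps) < 0.
  move=> t_itv i g_max; have := df_le t t_itv i.
  have f_max l : f l t <= f i t by have := g_max l; rewrite lerD2r.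
  by move=> /(_ f_max); lra.
have g_t1 l : g l t1 <= L + (k - eps) * t1 by rewrite /g lerD2r.
have := max_principle_strict t12 g_deriv g_max_lt0 g_t1 j.
rewrite /g; lra.
Qed.
End MaxPrinciple.

Section Relaxation.
Context {R : realType}.

Lemma relaxation_eventually_le [u g : R -> R] [a b : R] :
  (\forall t \near +oo, is_derive (t : R) 1 u (g t - u t)) ->
  (\forall t \near +oo, g t <= a) -> a < b -> \forall t \near +oo, u t <= b.
Proof.
move=> u_deriv g_le ab; have [M [M_real M_ok]] := filterI u_deriv g_le.
pose T := M + 1; pose v t := (u t - a) * expR t.
have v_deriv (t : R) : M < t -> is_derive t 1 v ((g t - a) * expR t).
  move=> /M_ok[ud _].
  have := is_deriveM (is_deriveB ud (is_derive_cst a t 1)) (is_derive_expR t).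
  by move/is_derive_eq; apply; rewrite /GRing.scale /= !fctE; ring.
have v_nincr t : T <= t -> v t <= v T.
  have MT s : T <= s -> M < s by rewrite /T; lra.
  apply: ler0_derive1_nincry => // [s|s|].
  - by rewrite in_itv /= andbT => /ltW/MT/v_deriv[].
  - rewrite in_itv /= andbT => /ltW/MT Ms.
    rewrite derive1E; have [_ ->] := v_deriv s Ms; rewrite mulr_le0_ge0 ?expR_ge0 //.
    by have [_] := M_ok s Ms; rewrite subr_le0.
  - apply: continuous_in_subspaceT => s; rewrite inE /= in_itv /= andbT => /MT Ms.
    exact: is_derive_continuous (v_deriv s Ms).
have decay : (u T - a) * expR T * expR (- t) @[t --> +oo] --> 0.
  by rewrite -(mulr0 ((u T - a) * expR T)); apply: cvgMr; exact: cvgr_expR.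
near=> t.
have : (u T - a) * expR T * expR (- t) < b - a.
  by near: t; apply: (cvgr_lt _ decay); rewrite subr_gt0.
have Tt : T <= t by near: t; apply: nbhs_pinfty_ge; rewrite realD ?M_real ?real1.
have := v_nincr t Tt.
rewrite /v -(ler_pM2r (expR_gt0 (- t))) -!mulrA -!expRD subrr expR0 mulr1.
lra.
Unshelve. all: by end_near. Qed.

Lemma relaxation_eventually_ge [u g : R -> R] [a b : R] :
  (\forall t \near +oo, is_derive (t : R) 1 u (g t - u t)) ->
  (\forall t \near +oo, a <= g t) -> b < a -> \forall t \near +oo, b <= u t.
Proof.
move=> u_deriv g_ge ba.
have : \forall t \near +oo, - u t <= - b.
  apply: (relaxation_eventually_le (g := fun t => - g t) (a := - a)).
  - apply: filterS u_deriv => t /is_deriveN/is_derive_eq; apply.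
    by rewrite opprB opprK addrC.
  - by apply: filterS g_ge => t; rewrite lerN2.
  - by rewrite ltrN2.
by apply: filterS => t; rewrite lerN2.
Qed.

Lemma relaxation_cvg [u g : R -> R] [l : R] :
  (\forall t \near +oo, is_derive (t : R) 1 u (g t - u t)) ->
  g t @[t --> +oo] --> l -> u t @[t --> +oo] --> l.
Proof.
move=> u_deriv g_cvg; apply/cvgrPdist_le => e e_gt0.
have u_le : \forall t \near +oo, u t <= l + e.
  apply: (relaxation_eventually_le u_deriv (a := l + e / 2)); last by lra.
  by apply: filterS (cvgr_lt _ g_cvg (l + e / 2) _) => [t /ltW|]; lra.
have u_ge : \forall t \near +oo, l - e <= u t.
  apply: (relaxation_eventually_ge u_deriv (a := l - e / 2)); last by lra.
  by apply: filterS (cvgr_gt _ g_cvg (l - e / 2) _) => [t /ltW|]; lra.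
by apply: filterS (filterI u_le u_ge) => t [? ?]; rewrite ler_distlC; apply/andP.
Qed.
End Relaxation.

Section Consensus.
Context {R : realType} {n : nat}.
Variables (f df : 'I_n -> R -> R) (T alpha : R).
(* [i0] only witnesses that [n] is positive. *)
Variable i0 : 'I_n.
Hypothesis alpha_gt0 : 0 < alpha.
Hypothesis f_deriv : forall t, T <= t -> forall i, is_derive t 1 (f i) (df i t).
Hypothesis df_le_at_max : forall t, T <= t -> forall i,
  (forall j, f j t <= f i t) -> forall j, df i t <= alpha * (f j t - f i t).
Hypothesis df_ge_at_min : forall t, T <= t -> forall i,
  (forall j, f i t <= f j t) -> forall j, alpha * (f j t - f i t) <= df i t.

Lemma upper_bound_persists [t1] t2 [L] : T <= t1 -> t1 <= t2 ->
  (forall j, f j t1 <= L) -> forall j, f j t2 <= L.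
Proof.
move=> Tt1 t12 f_t1 j; have := max_descent f df 0 t12 _ _ f_t1 j.
rewrite mul0r subr0; apply=> t /andP[t1t _].
  exact: f_deriv _ (le_trans Tt1 t1t).
move=> i i_max; have := df_le_at_max _ (le_trans Tt1 t1t) i i_max i.
by rewrite subrr mulr0 oppr0.
Qed.

Lemma lower_bound_persists [t1] t2 [L] : T <= t1 -> t1 <= t2 ->
  (forall j, L <= f j t1) -> forall j, L <= f j t2.
Proof.
move=> Tt1 t12 f_t1 j.
have := @max_descent _ _ (fun i t => - f i t) (fun i t => - df i t) 0 t1 t2 (- L).
rewrite mul0r subr0 => /(_ t12) descent.
rewrite -lerN2; apply: descent => [t /andP[t1t _] i|t /andP[t1t _] i f_min|l].
- exact: is_deriveN (f_deriv _ (le_trans Tt1 t1t) i).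
- have i_min l : f i t <= f l t by rewrite -lerN2.
  have := df_ge_at_min _ (le_trans Tt1 t1t) i i_min i.
  by rewrite subrr mulr0 oppr0 oppr_le0.
- by rewrite lerN2.
Qed.

Let upper := [set L | exists2 t, T <= t & forall i, f i t <= L].
Let lower := [set L | exists2 t, T <= t & forall i, L <= f i t].

Lemma lower_le_upper L' L : lower L' -> upper L -> L' <= L.
Proof.
move=> [t' Tt' f_ge] [t Tt f_le].
have := lower_bound_persists (t + t' - T) Tt' _ f_ge i0.
have := upper_bound_persists (t + t' - T) Tt _ f_le i0.
lra.
Qed.

Let fmax := f [arg max_(i > i0) f i T]%O T.
Let fmin := f [arg min_(i < i0) f i T]%O T.

Lemma le_fmax i : f i T <= fmax.
Proof. by rewrite /fmax; case: arg_maxP => // j _; apply. Qed.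

Lemma ge_fmin i : fmin <= f i T.
Proof. by rewrite /fmin; case: arg_minP => // j _; apply. Qed.

Lemma has_inf_upper : has_inf upper.
Proof.
split; first by exists fmax, T => //; apply: le_fmax.
by exists fmin => L; apply: lower_le_upper; exists T => //; apply: ge_fmin.
Qed.

Lemma has_sup_lower : has_sup lower.
Proof.
split; first by exists fmin, T => //; apply: ge_fmin.
by exists fmax => L' /lower_le_upper; apply; exists T => //; apply: le_fmax.
Qed.

Lemma inf_upper_le_sup_lower : inf upper <= sup lower.
Proof.
rewrite leNgt; apply/negP => gap; set d := inf upper - sup lower.
have d_gt0 : 0 < d by rewrite subr_gt0.
have descent t : T <= t -> forall i, (forall j, f j t <= f i t) ->
    df i t <= - (alpha * d).
  move=> Tt i i_max; case: (@arg_minP _ R _ i0 xpredT (f^~ t)) => // m _ m_min.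
  have : inf upper <= f i t by apply: (ge_inf has_inf_upper.2); exists t.
  have : f m t <= sup lower.
    by apply: (ub_le_sup has_sup_lower.2); exists t => // j; apply: m_min.
  move=> fm_le inf_le; apply: le_trans (df_le_at_max _ Tt i i_max m) _.
  by rewrite /d -mulrN ler_pM2l //; lra.
pose t2 := T + (fmax - fmin + 1) / (alpha * d).
have fmin_le_fmax : fmin <= fmax := le_trans (ge_fmin i0) (le_fmax i0).
have Tt2 : T <= t2.
  by rewrite /t2 lerDl divr_ge0 ?(ltW (mulr_gt0 alpha_gt0 d_gt0)) //; lra.
have f_le : f i0 t2 <= fmax - alpha * d * (t2 - T).
  apply: max_descent Tt2 _ _ le_fmax i0 => t /andP[Tt _].
    exact: f_deriv.
  exact: descent.
have f_ge := lower_bound_persists t2 (lexx T) Tt2 ge_fmin i0.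
have : alpha * d * (t2 - T) = fmax - fmin + 1.
  by rewrite /t2 addrAC subrr add0r mulrC divfK // mulf_neq0 ?gt_eqF.
lra.
Qed.

Theorem consensus : exists l : R, forall i, f i t @[t --> +oo] --> l.
Proof.
have inf_eq_sup : inf upper = sup lower.
  apply/le_anti; rewrite inf_upper_le_sup_lower /=.
  apply: ge_sup has_sup_lower.1 _ => L' lower_L'.
  by apply: lb_le_inf has_inf_upper.1 _ => L; exact: lower_le_upper lower_L'.
exists (sup lower) => i; apply/cvgrPdist_le => e e_gt0.
have [LA [tA TtA f_le] LA_lt] : exists2 LA, upper LA & LA < sup lower + e.
  by apply: inf_lt has_inf_upper.1 _; rewrite inf_eq_sup ltrDl.
have [LB [tB TtB f_ge] LB_gt] : exists2 LB, lower LB & sup lower - e < LB.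
  by apply: sup_gt has_sup_lower.1 _; rewrite gtrDl oppr_lt0.
near=> t.
have tAt : tA <= t by near: t; apply: nbhs_pinfty_ge; exact: num_real.
have tBt : tB <= t by near: t; apply: nbhs_pinfty_ge; exact: num_real.
have := upper_bound_persists t TtA tAt f_le i.
have := lower_bound_persists t TtB tBt f_ge i.
rewrite ler_distlC => ? ?; apply/andP; split; lra.
Unshelve. all: by end_near. Qed.

End Consensus.

Lemma weighted_sum_le [R : numDomainType] [I : finType] [a d : I -> R] [alpha : R]
    (j0 : I) :
  0 <= alpha -> (forall j, alpha <= a j) -> (forall j, d j <= 0) ->
  \sum_j a j * d j <= alpha * d j0.
Proof.
move=> alpha_ge0 a_ge d_le0.
apply: (@le_trans _ _ (\sum_j alpha * d j)).
  by apply: ler_sum => j _; rewrite ler_wnM2r.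
rewrite -mulr_sumr ler_wpM2l // (bigD1 j0) //= gerDl.
by apply: sumr_le0 => j _.
Qed.

Section OpinionField.
Context {R : realType} {N : nat}.
Variables (phi : R -> R) (X : 'I_N -> R) (W : 'I_N -> 'I_N -> R) (c : R) (i : 'I_N).
Hypothesis c_gt0 : 0 < c.
Hypothesis W_ge : forall j, c / 2 <= W i j.
Hypothesis W_le1 : forall j, W i j <= 1.
Hypothesis phi_gt_c : forall j, c < phi (X j - X i).

Let rate := N%:R^-1 * (c / 2) * c.

Lemma opinion_rhsE : opinion_rhs phi X W i =
  \sum_j ((degree W i)^-1 * W i j * phi (X j - X i)) * (X j - X i).
Proof.
rewrite /opinion_rhs mulr_sumr [RHS](bigD1 i) //= subrr mulr0 add0r.
by apply: eq_bigr => j _; rewrite !mulrA.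
Qed.

Lemma rate_ge0 : 0 <= rate.
Proof.
apply: mulr_ge0 (ltW c_gt0).
by apply: mulr_ge0; rewrite ?invr_ge0 ?divr_ge0 ?ler0n ?(ltW c_gt0).
Qed.

Lemma opinion_weight_ge j : rate <= (degree W i)^-1 * W i j * phi (X j - X i).
Proof.
have c2_gt0 : 0 < c / 2 by rewrite divr_gt0.
have deg_le : degree W i <= N%:R.
  by rewrite -[N in N%:R]card_ord -sumr_const; apply: ler_sum => k _.
have deg_gt0 : 0 < degree W i.
  rewrite /degree (bigD1 i) //= ltr_wpDr ?(lt_le_trans c2_gt0 (W_ge i)) //.
  by apply: sumr_ge0 => k _; apply: le_trans (ltW c2_gt0) (W_ge k).
have N_gt0 : 0 < N%:R :> R by apply: lt_le_trans deg_le.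
apply: ler_pM; [|exact: ltW| |exact: ltW].
- by apply: mulr_ge0; rewrite ?invr_ge0 ?ler0n // divr_ge0 // ltW.
- by apply: ler_pM; rewrite ?invr_ge0 ?lef_pV2 ?posrE // ltW.
Qed.

Lemma opinion_rhs_le_at_max : (forall k, X k <= X i) ->
  forall j, opinion_rhs phi X W i <= rate * (X j - X i).
Proof.
move=> X_max j; rewrite opinion_rhsE.
by apply: (weighted_sum_le j rate_ge0 opinion_weight_ge) => k; rewrite subr_le0.
Qed.

Lemma opinion_rhs_ge_at_min : (forall k, X i <= X k) ->
  forall j, rate * (X j - X i) <= opinion_rhs phi X W i.
Proof.
move=> X_min j; rewrite opinion_rhsE -lerN2 -sumrN -mulrN opprB.
under eq_bigr do rewrite -mulrN opprB.
by apply: (weighted_sum_le j rate_ge0 opinion_weight_ge) => k; rewrite subr_le0.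
Qed.

End OpinionField.

Lemma lipschitz_on_m22_cvg (R : realType) (phi : R -> R) (T : Type)
    (F : set_system T) {FF : Filter F} (d : T -> R) (r : R) :
  lipschitz_on_m22 phi -> -2 <= r <= 2 -> (\forall t \near F, -2 <= d t <= 2) ->
  d t @[t --> F] --> r -> phi (d t) @[t --> F] --> phi r.
Proof.
move=> [L phiL] r_itv d_itv /cvgrPdist_le d_cvg; apply/cvgrPdist_le => e e_gt0.
have K_gt0 : 0 < `|L| + 1 by rewrite ltr_wpDl.
have eK_gt0 : 0 < e / (`|L| + 1) by rewrite divr_gt0.
apply: filterS2 d_itv (d_cvg _ eK_gt0) => t dt_itv dt_near.
apply: le_trans (phiL _ _ r_itv dt_itv) _.
apply: le_trans (_ : `|L| * `|r - d t| <= _); first by rewrite ler_wpM2r // ler_norm.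
rewrite -(divfK (lt0r_neq0 K_gt0) e) mulrC; apply: ler_pM => //.
by rewrite lerDl.
Qed.

Lemma memory_weights_eventually_ge {R : realType} {N : nat} [phi : R -> R]
    [x : R -> 'I_N -> R] [w : R -> 'I_N -> 'I_N -> R] [b c : R] :
  b < c -> b <= 1 ->
  (forall t : R, 0 < t -> forall i j, c < phi (x t j - x t i)) ->
  (forall t : R, 0 < t -> forall i, w t i i = 1) ->
  (forall t : R, 0 < t -> forall i j, i != j ->
     is_derive t 1 (fun s => w s i j) (phi (x t j - x t i) - w t i j)) ->
  \forall t \near +oo, forall i j, b <= w t i j.
Proof.
move=> bc b_le1 phi_gt w_diag w_deriv.
have ev_pos : \forall t \near +oo, 0 < t :> R by apply: nbhs_pinfty_gt; exact: real0.
apply: filter_forall => i; apply: filter_forall => j.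
have [<- | ij] := eqVneq i j; first by apply: filterS ev_pos => t /w_diag ->.
apply: (relaxation_eventually_ge (g := fun t => phi (x t j - x t i)) (a := c)) => //.
  by apply: filterS ev_pos => t t_gt0; exact: w_deriv.
by apply: filterS ev_pos => t t_gt0; exact/ltW/phi_gt.
Qed.

Lemma opinion_consensus {R : realType} {N : nat} [phi : R -> R]
    [x : R -> 'I_N -> R] [w : R -> 'I_N -> 'I_N -> R] [c T : R] :
  0 < c ->
  (forall t, T <= t -> forall i,
     is_derive t 1 (fun s => x s i) (opinion_rhs phi (x t) (w t) i)) ->
  (forall t, T <= t -> forall i j, c / 2 <= w t i j) ->
  (forall t, T <= t -> forall i j, w t i j <= 1) ->
  (forall t, T <= t -> forall i j, c < phi (x t j - x t i)) ->
  exists xstar : R, forall i, x t i @[t --> +oo] --> xstar.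
Proof.
move=> c_gt0 x_deriv w_ge w_le1 phi_gt.
have [N0 | N_gt0] := posnP N.
  by exists 0 => i; exfalso; move: (ltn_ord i); rewrite {2}N0.
apply: (consensus (fun i t => x t i) (fun i t => opinion_rhs phi (x t) (w t) i) T
  (N%:R^-1 * (c / 2) * c) (Ordinal N_gt0) _ x_deriv) => [|t Tt i x_max|t Tt i x_min].
- by rewrite !mulr_gt0 ?invr_gt0 ?ltr0n ?divr_gt0.
- by apply: opinion_rhs_le_at_max => // k; [exact: w_ge | exact: w_le1 | exact: phi_gt].
- by apply: opinion_rhs_ge_at_min => // k; [exact: w_ge | exact: w_le1 | exact: phi_gt].
Qed.

Theorem corollary1 (R : realType) (N : nat) (phi : R -> R)
    (x : R -> 'I_N -> R) (w : R -> 'I_N -> 'I_N -> R) (c_phi : R) :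
  (* standing assumptions on phi : [-2,2] -> [0,1] *)
  (forall r : R, -2 <= r <= 2 -> 0 <= phi r <= 1) ->
  lipschitz_on_m22 phi ->
  (forall r : R, -2 <= r <= 2 -> phi (- r) = phi r) ->
  0 < phi 0 ->
  (* extra hypothesis of the corollary *)
  0 < c_phi ->
  (forall r : R, -2 <= r <= 2 -> c_phi < phi r) ->
  (* state space: x_i(t) in [-1,1], w_ij(t) in [0,1] *)
  (forall t : R, 0 <= t -> forall i, -1 <= x t i <= 1) ->
  (forall t : R, 0 <= t -> forall i j, 0 <= w t i j <= 1) ->
  (* w_ii == 1 *)
  (forall t : R, 0 <= t -> forall i, w t i i = 1) ->
  (* initial data *)
  (forall i j : 'I_N, (i <= j)%N -> x 0 i <= x 0 j) ->
  strongly_connected (w 0) ->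
  (* (x, w) solves the system on [0, +oo) *)
  (forall i, {within `[0, +oo[, continuous (fun t => x t i)}) ->
  (forall i j, {within `[0, +oo[, continuous (fun t => w t i j)}) ->
  (forall t : R, 0 < t -> forall i,
     is_derive t 1 (fun s => x s i) (opinion_rhs phi (x t) (w t) i)) ->
  (forall t : R, 0 < t -> forall i j, i != j ->
     is_derive t 1 (fun s => w s i j) (phi (x t j - x t i) - w t i j)) ->
  (* conclusion: consensus and full connectivity with weight phi 0 *)
  (exists xstar : R, forall i, x t i @[t --> +oo] --> xstar) /\
  (forall i j : 'I_N, i != j -> w t i j @[t --> +oo] --> phi 0) /\
  0 < phi 0.
Proof.
move=> phi_range phi_lip _ phi0_gt0 c_gt0 phi_gt_c x_range w_range w_diag _ _ _ _
  x_deriv w_deriv.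
have gap_range t : 0 <= t -> forall i j, -2 <= x t j - x t i <= 2.
  move=> t_ge0 i j; have /andP[? ?] := x_range t t_ge0 i.
  by have /andP[? ?] := x_range t t_ge0 j; apply/andP; split; lra.
have phi_gt t : 0 <= t -> forall i j, c_phi < phi (x t j - x t i).
  by move=> t_ge0 i j; apply/phi_gt_c/gap_range.
have c_lt1 : c_phi < 1.
  by have /andP[_] := phi_range 0 ltac:(lra); have := phi_gt_c 0 ltac:(lra); lra.
have ev_pos : \forall t \near +oo, 0 < t :> R by apply: nbhs_pinfty_gt; exact: real0.
have w_ge : \forall t \near +oo, forall i j, c_phi / 2 <= w t i j.
  apply: (memory_weights_eventually_ge (c := c_phi)) w_deriv; [lra | lra | | ].
    by move=> t /ltW; apply: phi_gt.
  by move=> t /ltW; apply: w_diag.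
have [T T_ok] : exists T, forall t, T <= t -> 0 < t /\ forall i j, c_phi / 2 <= w t i j.
  by have [M [_ M_ok]] := filterI ev_pos w_ge; exists (M + 1) => t Mt; apply: M_ok; lra.
have [xstar x_cvg] : exists xstar : R, forall i, x t i @[t --> +oo] --> xstar.
  apply: (opinion_consensus c_gt0) => t /T_ok[t_gt0 w_ge_t]; first exact: x_deriv.
  - exact: w_ge_t.
  - by move=> i j; have /andP[] := w_range t (ltW t_gt0) i j.
  - exact/phi_gt/ltW.
split; first by exists xstar.
split=> // i j ij.
apply: (relaxation_cvg (g := fun t => phi (x t j - x t i))).
  by apply: filterS ev_pos => t t_gt0; exact: w_deriv.
apply: lipschitz_on_m22_cvg phi_lip _ _ _; first by rewrite oppr_le0 ler0n.
  by apply: filterS ev_pos => t /ltW t_ge0; exact: gap_range.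
by rewrite -(subrr xstar); apply: cvgB.
Qed.
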